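(* Let $G$ be a graph, let $F(G)$ be the union of all tree components of $G$ and $cmp(F(G))$ the number of tree components of $G$, and let $k\ge1$. The following are equivalent: (a1) $M_k(G)$ has at least one circuit; (a2) $k\le \Delta G+cmp(F(G))$; (a3) $M_k(G)$ is a non-trivial matroid.
   Context: Graphs are finite, may have loops and parallel edges, and have no isolated vertices. $\Delta G=|E(G)|-|V(G)|$. For $X\subseteq E(G)$, $G\langle X\rangle$ is the subgraph with edge set $X$ and vertex set the vertices incident to $X$. For $k\ge0$, the $k$-circular matroid $M_k(G)$ is the matroid on $E(G)$ whose circuits are the inclusion-minimal members of $\{C\subseteq E(G):C\neq\emptyset,\ |C|=|V(G\langle C\rangle)|+k\}$. A matroid on $E$ is trivial if $E$ is a base or $E$ is a cobase (i.e. $E\setminus\emptyset$ complement of a base is $E$), and non-trivial otherwise; equivalently, non-trivial means it has at least one circuit and at least one cocircuit. *)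

From mathcomp Require Import all_boot all_order all_algebra.
Set Implicit Arguments. Unset Strict Implicit. Unset Printing Implicit Defensive.

(* A finite multigraph (loops and parallel edges allowed): vertex type V,
   edge type E, each edge e has ends (ends e).1 and (ends e).2
   (equal ends = loop). *)
Section Graphs.
Variables (V E : finType) (ends : E -> V * V).

Definition incident (e : E) (v : V) : bool :=
  (v == (ends e).1) || (v == (ends e).2).

Definition no_isolated : Prop := forall v : V, exists e : E, incident e v.

Definition verts_of (X : {set E}) : {set V} :=
  [set v | [exists e in X, incident e v]].

Definition deltaG : int := (#|E|)%:Z - (#|V|)%:Z.

Definition kcirc_family (k : nat) (C : {set E}) : bool :=
  (C != set0) && (#|C| == #|verts_of C| + k).

Definition is_circuit (k : nat) (C : {set E}) : bool :=
  minset (kcirc_family k) C.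

Definition indep (k : nat) (X : {set E}) : bool :=
  [forall C : {set E}, is_circuit k C ==> ~~ (C \subset X)].

Definition is_base (k : nat) (B : {set E}) : bool := maxset (indep k) B.

(* trivial: E is a base, or E is a cobase (i.e. the empty set is a base) *)
Definition trivial_matroid (k : nat) : bool :=
  is_base k setT || is_base k set0.

Definition nontrivial_matroid (k : nat) : bool := ~~ trivial_matroid k.

Definition adj : rel V := fun u v =>
  [exists e, (((ends e).1 == u) && ((ends e).2 == v))
          || (((ends e).1 == v) && ((ends e).2 == u))].

Definition component (u : V) : {set V} := [set v | connect adj u v].

Definition components : {set {set V}} := [set component u | u : V].

Definition edges_in (S : {set V}) : {set E} :=
  [set e | ((ends e).1 \in S) && ((ends e).2 \in S)].

(* a (connected) component S is a tree iff |E(S)| = |S| - 1 *)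
Definition tree_component (S : {set V}) : bool :=
  #|edges_in S| + 1 == #|S|.

Definition n_tree_components : nat :=
  #|[set S in components | tree_component S]|.

End Graphs.

(* For an edge set C, the excess |C| - |V(G<C>)| splits over the components
   of G.  On a component S whose vertices met by C form R, it is at most
   |E(S)| - |S| + [S is a tree]: if R is nonempty, every vertex of S outside R
   costs an edge of S leaving R, and if R is empty, the connected graph S still
   has at least |S| - 1 edges.  Summing, the excess of C is at most
   Delta G + cmp(F(G)), with equality for the set of edges of the non-tree
   components.  Deleting one edge lowers the excess by at most one, so as soon
   as some C has excess at least k, some nonempty C has excess exactly k, and a
   minimal such set is a circuit: (a1) <-> (a2).  Finally E is independent iff
   there is no circuit, and since a circuit has more than k >= 1 edges, every
   single edge is independent, so the empty set is a base only when E is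
   empty: (a1) <-> (a3). *)

From mathcomp Require Import all_boot all_order all_algebra.
From mathcomp Require Import zify.
Set Implicit Arguments. Unset Strict Implicit. Unset Printing Implicit Defensive.

Section KCircularMatroid.
Variables (V E : finType) (ends : E -> V * V).
Local Notation adj := (adj ends).
Local Notation component := (component ends).
Local Notation components := (components ends).
Local Notation edges_in := (edges_in ends).
Local Notation verts_of := (verts_of ends).
Local Notation tree_component := (tree_component ends).
Local Notation n_tree_components := (n_tree_components ends).

Lemma adj_sym : symmetric adj.
Proof. by move=> u v; apply/existsP/existsP => -[e He]; exists e; rewrite orbC. Qed.

Lemma connect_adj_sym : connect_sym adj.
Proof. exact: sym_connect_sym adj_sym. Qed.

Lemma adj_ends e : adj (ends e).1 (ends e).2.
Proof. by apply/existsP; exists e; rewrite !eqxx. Qed.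

Lemma eq_component u v : (component v == component u) = (v \in component u).
Proof.
apply/eqP/idP => [<-|]; first by rewrite inE connect0.
rewrite inE => uv; apply/setP => x; rewrite !inE.
by rewrite (same_connect connect_adj_sym uv).
Qed.

Lemma component_incident e v :
  incident ends e v -> component v = component (ends e).1.
Proof.
rewrite /incident => /orP [] /eqP -> //; apply/eqP; rewrite eq_component inE.
exact: connect1 (adj_ends e).
Qed.

Lemma mem_edges_in_component e u :
  (e \in edges_in (component u)) = (component (ends e).1 == component u).
Proof.
rewrite inE eq_component; apply: andb_idr => e1u.
rewrite -eq_component (@component_incident e) ?eq_component //.
by rewrite /incident eqxx orbT.
Qed.

Lemma verts_ofS (A B : {set E}) : A \subset B -> verts_of A \subset verts_of B.
Proof.
move=> /subsetP AB; apply/subsetP => v; rewrite !inE.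
by case/existsP => e /andP [/AB eB ve]; apply/existsP; exists e; rewrite eB.
Qed.

Lemma edges_in_verts_of (C : {set E}) (S : {set V}) :
  C :&: edges_in S \subset edges_in (verts_of C :&: S).
Proof.
apply/subsetP => e /setIP [eC]; rewrite !inE => /andP [-> ->].
by rewrite !andbT; apply/andP; split; apply/existsP; exists e;
  rewrite eC /incident eqxx ?orbT.
Qed.

Lemma card_verts_components (X : {set V}) :
  #|X| = \sum_(S in components) #|X :&: S|.
Proof.
rewrite -sum1_card (partition_big component (mem components)) /=; last first.
  by move=> v _; apply/imsetP; exists v.
apply: eq_bigr => S /imsetP [u _ ->]; rewrite -sum1_card; apply: eq_bigl => v.
by rewrite eq_component !inE.
Qed.

Lemma card_edges_components (Y : {set E}) :
  #|Y| = \sum_(S in components) #|Y :&: edges_in S|.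
Proof.
rewrite -sum1_card.
rewrite (partition_big (fun e => component (ends e).1) (mem components)) /=.
  apply: eq_bigr => S /imsetP [u _ ->]; rewrite -sum1_card; apply: eq_bigl => e.
  by rewrite in_setI mem_edges_in_component.
by move=> e _; apply/imsetP; exists (ends e).1.
Qed.

Lemma n_tree_components_sum :
  n_tree_components = \sum_(S in components) tree_component S.
Proof.
rewrite /n_tree_components -sum1_card big_mkcond [RHS]big_mkcond /=.
by apply: eq_bigr => S _; rewrite inE; case: (S \in components); case: tree_component.
Qed.

Lemma card_addV_components (C : {set E}) :
  #|C| + #|V| = \sum_(S in components) (#|C :&: edges_in S| + #|S|).
Proof.
rewrite big_split /= (card_edges_components C) -cardsT (card_verts_components setT).
by congr (_ + _); apply: eq_bigr => S _; rewrite setTI.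
Qed.

Lemma card_addE_verts_components (C : {set E}) :
  #|E| + #|verts_of C| + n_tree_components =
  \sum_(S in components) (#|edges_in S| + #|verts_of C :&: S| + tree_component S).
Proof.
rewrite !big_split /= -cardsT (card_edges_components setT).
rewrite (card_verts_components (verts_of C)) n_tree_components_sum.
by congr (_ + _ + _); apply: eq_bigr => S _; rewrite setTI.
Qed.

Lemma connect_exit u v (R : {set V}) :
  connect adj u v -> u \in R -> v \notin R ->
  exists x y, [/\ adj x y, x \in R & y \notin R].
Proof.
case/connectP => p; elim: p u => [|z p IH] u /=; first by move=> _ -> ->.
case/andP => uz zp vlast uR vR.
by case: (boolP (z \in R)) => [zR|zNR]; [exact: IH zp vlast zR vR | exists u, z].
Qed.

Lemma card_component_le u (R : {set V}) : R \subset component u -> R != set0 ->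
  #|component u| <= #|R| + #|edges_in (component u) :\: edges_in R|.
Proof.
move Dn: #|component u :\: R| => n; elim: n R Dn => [|n IH] R Dn RS R0.
  by rewrite -(cardsID R (component u)) Dn addn0 (setIidPr RS) leq_addr.
have [w] : exists w, w \in component u :\: R.
  by apply/set0Pn; rewrite -card_gt0 Dn.
rewrite in_setD => /andP [wNR wS]; have [r rR] := set0Pn _ R0.
have rS : r \in component u by apply: (subsetP RS).
have rw : connect adj r w.
  by move: rS wS; rewrite !inE connect_adj_sym => ur; apply: connect_trans.
have [x [y [xy xR yNR]]] := connect_exit rw rR wNR.
have xS : x \in component u by apply: (subsetP RS).
have yS : y \in component u.
  by move: xS; rewrite !inE => /connect_trans; apply; apply: connect1.
have Dn' : #|component u :\: (y |: R)| = n.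
  move: Dn; rewrite (cardsD1 y) in_setD yNR yS add1n => -[<-].
  by rewrite setDDl setUC.
have yRS : y |: R \subset component u by rewrite subUset sub1set yS RS.
have := IH _ Dn' yRS (subset_neq0 (subsetUr _ _) R0); rewrite cardsU1 yNR.
rewrite add1n => /leq_trans; apply; rewrite addSn ltn_add2l.
have [e xey] := existsP xy.
have eS : e \in edges_in (component u).
  by rewrite inE; case/orP: xey => /andP [/eqP -> /eqP ->]; rewrite xS yS.
have eNR : e \notin edges_in R.
  rewrite inE negb_and.
  by case/orP: xey => /andP [/eqP -> /eqP ->]; rewrite yNR ?orbT.
have eyR : e \in edges_in (y |: R).
  rewrite inE !in_setU1.
  by case/orP: xey => /andP [/eqP -> /eqP ->]; rewrite eqxx xR orbT.
apply: proper_card; apply/properP; split.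
  apply: setDS; apply/subsetP => f; rewrite !inE.
  by case/andP => -> ->; rewrite !orbT.
by exists e; rewrite !in_setD ?eyR ?eNR ?eS.
Qed.

Lemma card_component_le_edges u :
  #|component u| <= #|edges_in (component u)| + tree_component (component u).
Proof.
have uS : [set u] \subset component u by rewrite sub1set inE connect0.
have u0 : [set u] != set0 by apply/set0Pn; exists u; rewrite inE.
have := card_component_le uS u0.
have := subset_leq_card (subsetDl (edges_in (component u)) (edges_in [set u])).
by rewrite /tree_component cards1; case: eqP => /=; lia.
Qed.

Lemma card_sub_component_le u (C : {set E}) :
  #|C :&: edges_in (component u)| + #|component u| <=
  #|edges_in (component u)| + #|verts_of C :&: component u|
    + tree_component (component u).
Proof.
set R := verts_of C :&: component u.
have CR :
    C :&: edges_in (component u) \subset edges_in (component u) :&: edges_in R.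
  by rewrite subsetI subsetIr edges_in_verts_of.
have := cardsID (edges_in R) (edges_in (component u)).
have [R0|R0] := eqVneq R set0.
  have -> : C :&: edges_in (component u) = set0.
    apply/eqP; rewrite -subset0; apply: subset_trans CR _.
    by apply/subsetP => e; rewrite R0 !inE /= andbF.
  by rewrite R0 cards0; have := card_component_le_edges u; lia.
have := card_component_le (subsetIr _ _ : R \subset component u) R0.
have := subset_leq_card CR; lia.
Qed.

Lemma card_sub_verts_le (C : {set E}) :
  #|C| + #|V| <= #|E| + #|verts_of C| + n_tree_components.
Proof.
rewrite card_addV_components card_addE_verts_components.
by apply: leq_sum => S /imsetP [u _ ->]; apply: card_sub_component_le.
Qed.

Definition nontree_edges : {set E} :=
  [set e | ~~ tree_component (component (ends e).1)].

Lemma nontree_edges_component u e : e \in edges_in (component u) ->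
  (e \in nontree_edges) = ~~ tree_component (component u).
Proof. by rewrite mem_edges_in_component inE => /eqP ->. Qed.

Lemma card_nontree_edges :
  #|E| + #|verts_of nontree_edges| + n_tree_components <= #|nontree_edges| + #|V|.
Proof.
rewrite card_addV_components card_addE_verts_components.
apply: leq_sum => S /imsetP [u _ ->].
case: (boolP (tree_component (component u))) => [tree | Ntree].
  have -> : verts_of nontree_edges :&: component u = set0.
    apply/setP => v; rewrite !inE andbC; apply/negP => /andP [uv /existsP [e]].
    have eS : incident ends e v -> e \in edges_in (component u).
      move/component_incident; rewrite mem_edges_in_component => <-.
      by rewrite eq_component inE.
    by case/andP => eC /eS /nontree_edges_component; rewrite eC tree.
  by move/eqP: tree; rewrite cards0; lia.
have /setIidPr -> : edges_in (component u) \subset nontree_edges.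
  by apply/subsetP => e eS; rewrite (nontree_edges_component eS).
by rewrite addn0 leq_add2l subset_leq_card ?subsetIr.
Qed.

Lemma exists_kcirc_family k (C : {set E}) :
  0 < k -> #|verts_of C| + k <= #|C| ->
  exists C', kcirc_family ends k C'.
Proof.
move=> k_gt0; move Dn: #|C| => n; elim: n C Dn => [|n IH] C Dn; first lia.
have [eqC _|neqC CV] := eqVneq #|C| (#|verts_of C| + k).
  by exists C; rewrite /kcirc_family eqC eqxx andbT -card_gt0; lia.
have [e eC] : exists e, e \in C by apply/set0Pn; rewrite -card_gt0 Dn.
have := subset_leq_card (verts_ofS (subD1set C e)).
have := cardsD1 e C; rewrite eC => DC VC.
apply: (IH (C :\ e)); lia.
Qed.

Lemma exists_circuitP k : 0 < k ->
  (exists C, is_circuit ends k C) <->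
  exists C : {set E}, #|verts_of C| + k <= #|C|.
Proof.
move=> k_gt0; split=> [[C /minsetP [/andP [_ /eqP CV] _]]|[C CV]].
  by exists C; rewrite CV.
have [C' /minset_exists [A circA _]] := exists_kcirc_family k_gt0 CV.
by exists A.
Qed.

Lemma exists_circuit_iff k : 0 < k ->
  (exists C, is_circuit ends k C) <-> k + #|V| <= #|E| + n_tree_components.
Proof.
move=> k_gt0; rewrite exists_circuitP //; split=> [[C CV] | k_le].
  by have := card_sub_verts_le C; lia.
by exists nontree_edges; have := card_nontree_edges; lia.
Qed.

Lemma circuit_card_gt k C : is_circuit ends k C -> k < #|C|.
Proof.
case/minsetP => /andP [/set0Pn [e eC] /eqP ->] _.
rewrite -add1n leq_add2r card_gt0.
by apply/set0Pn; exists (ends e).1; rewrite inE; apply/existsP; exists e;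
  rewrite eC /incident eqxx.
Qed.

Lemma is_base_setT k : is_base ends k setT = indep ends k setT.
Proof.
apply/maxsetP/idP => [[] //|indepT]; split=> // B _ TB.
by apply/eqP; rewrite eqEsubset subsetT.
Qed.

Lemma indep_setTPn k :
  reflect (exists C, is_circuit ends k C) (~~ indep ends k setT).
Proof.
apply: (iffP forallPn) => [[C]|[C circC]].
  by rewrite subsetT implybF negbK; exists C.
by exists C; rewrite circC subsetT.
Qed.

Lemma indep_set1 k e : 0 < k -> indep ends k [set e].
Proof.
move=> k_gt0; apply/forallP => C; apply/implyP => /circuit_card_gt k_lt.
by apply/negP => /subset_leq_card; rewrite cards1; lia.
Qed.

Lemma not_base_set0 k (e : E) : 0 < k -> ~~ is_base ends k set0.
Proof.
move=> k_gt0; apply/negP => /maxsetP [_ /(_ _ (indep_set1 e k_gt0))].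
move/(_ (sub0set _)).
by move/setP/(_ e); rewrite !inE eqxx.
Qed.

Lemma nontrivial_matroidP k : 0 < k ->
  nontrivial_matroid ends k <-> exists C, is_circuit ends k C.
Proof.
move=> k_gt0; rewrite /nontrivial_matroid /trivial_matroid negb_or is_base_setT.
split=> [/andP [/indep_setTPn //]|[C circC]].
have /set0Pn [e _] : C != set0.
  by rewrite -card_gt0; have := circuit_card_gt circC; lia.
by rewrite (not_base_set0 e) // andbT; apply/indep_setTPn; exists C.
Qed.

End KCircularMatroid.

Theorem mainTheorem10 (V E : finType) (ends : E -> V * V) (k : nat) :
  no_isolated ends -> (1 <= k)%N ->
  [/\ ((exists C : {set E}, is_circuit ends k C) <->
       ((k%:Z <= deltaG V E + (n_tree_components ends)%:Z)%R)),
      ((k%:Z <= deltaG V E + (n_tree_components ends)%:Z)%R <->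
       nontrivial_matroid ends k)
    & (nontrivial_matroid ends k <-> (exists C : {set E}, is_circuit ends k C))].
Proof.
(* An isolated vertex is a one-vertex tree component: it lowers Delta G by one
   and raises cmp(F(G)) by one. *)
move=> _ k_gt0.
have a2_nat : (k%:Z <= deltaG V E + (n_tree_components ends)%:Z)%R <->
    k + #|V| <= #|E| + n_tree_components ends by rewrite /deltaG; split; lia.
have a1a2 := exists_circuit_iff ends k_gt0.
have a3a1 := nontrivial_matroidP ends k_gt0.
by split; tauto.
Qed.
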